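(* If $G_1$ and $G_2$ admit uniform WIASIs, then the cartesian product $G_1\times G_2$ admits a uniform WIASI and $\varphi(G_1\times G_2)=0$.
   Context: All graphs are finite, simple and without isolated vertices. $\mathbb{N}_0$ denotes the set of non-negative integers; for finite $A,B\subseteq\mathbb{N}_0$, $A+B=\{a+b: a\in A, b\in B\}$. An integer additive set-indexer (IASI) of a graph $G$ is an injective map $f$ from $V(G)$ to the finite non-empty subsets of $\mathbb{N}_0$ such that the induced edge map $f^+(uv)=f(u)+f(v)$ is injective on $E(G)$. A weak IASI (WIASI) is an IASI $f$ with $|f^+(uv)|=\max(|f(u)|,|f(v)|)$ for every edge $uv$ (equivalently, for every edge at least one end vertex has a singleton label). A vertex or edge is mono-indexed if its set-label has cardinality $1$. Every graph admits a WIASI. The sparing number $\varphi(G)$ is the minimum, over all WIASIs of $G$, of the number of mono-indexed edges of $G$. For an integer $k\ge 2$, a WIASI $f$ is $k$-uniform if $|f^+(e)|=k$ for every edge $e$; $G$ admits a uniform WIASI (UWIASI) if it admits a $k$-uniform WIASI for some integer $k\ge 2$. The cartesian product $G_1\times G_2$ has vertex set $V(G_1)\times V(G_2)$, with $(a,b)$ adjacent to $(a',b')$ iff either $a=a'$ and $bb'\in E(G_2)$, or $b=b'$ and $aa'\in E(G_1)$. *)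

From mathcomp Require Import all_boot.
Set Implicit Arguments. Unset Strict Implicit. Unset Printing Implicit Defensive.

Definition simple_graph (T : finType) (e : rel T) : Prop :=
  symmetric e /\ irreflexive e /\ (forall x : T, exists y, e x y).

(* Finite subsets of N_0 are represented by sequences of naturals,
   read as sets (equality of sets is =i, cardinality counts distinct items). *)
Definition sumset (A B : seq nat) : seq nat := [seq a + b | a <- A, b <- B].
Definition card_n (A : seq nat) : nat := size (undup A).

Definition edges (T : finType) (e : rel T) : {set {set T}} :=
  [set [set p.1; p.2] | p : T * T & e p.1 p.2].

Definition is_IASI (T : finType) (e : rel T) (f : T -> seq nat) : Prop :=
  (forall v, f v != [::]) /\
  (forall u v, f u =i f v -> u = v) /\
  (forall u v u' v', e u v -> e u' v' ->
      sumset (f u) (f v) =i sumset (f u') (f v') -> [set u; v] = [set u'; v']).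

Definition is_WIASI (T : finType) (e : rel T) (f : T -> seq nat) : Prop :=
  is_IASI e f /\
  (forall u v, e u v ->
      card_n (sumset (f u) (f v)) = maxn (card_n (f u)) (card_n (f v))).

Definition is_k_uniform_WIASI (T : finType) (e : rel T) (k : nat)
  (f : T -> seq nat) : Prop :=
  is_WIASI e f /\ (forall u v, e u v -> card_n (sumset (f u) (f v)) = k).

Definition admits_UWIASI (T : finType) (e : rel T) : Prop :=
  exists k f, 2 <= k /\ is_k_uniform_WIASI e k f.

Definition mono_edges_count (T : finType) (e : rel T) (f : T -> seq nat) : nat :=
  #|[set [set p.1; p.2] | p : T * T &
      e p.1 p.2 && (card_n (sumset (f p.1) (f p.2)) == 1)]|.

Definition sparing_number (T : finType) (e : rel T) (n : nat) : Prop :=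
  (exists f, is_WIASI e f /\ mono_edges_count e f = n) /\
  (forall f, is_WIASI e f -> n <= mono_edges_count e f).

Definition cart_prod (T1 T2 : finType) (e1 : rel T1) (e2 : rel T2) : rel (T1 * T2) :=
  fun x y => ((x.1 == y.1) && e2 x.2 y.2) || ((x.2 == y.2) && e1 x.1 y.1).

From mathcomp Require Import all_boot zify.
Set Implicit Arguments. Unset Strict Implicit. Unset Printing Implicit Defensive.

(* In a k-uniform WIASI with k >= 2 every edge joins a mono-indexed vertex to
   a vertex with a larger label: two singletons give a singleton sum, and if
   |A| >= 2 then |A + B| > |B|, so two large labels violate weakness.  Hence
   "being mono-indexed" is a proper 2-colouring, and the xor of the two
   colourings properly 2-colours G1 x G2.  A properly 2-coloured graph on
   vertices numbered 0, ..., N-1 gets the labels {i} on one side and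
   {N j, N j + 1} on the other: every edge sum is {i + N j, i + N j + 1},
   which has two elements and determines the edge by base-N decoding.
   Finally no edge of a k-uniform WIASI with k >= 2 is mono-indexed, so the
   sparing number is 0. *)

Lemma card_n_eq A B : A =i B -> card_n A = card_n B.
Proof.
move=> eqAB; apply: perm_size; apply: uniq_perm; rewrite ?undup_uniq // => x.
by rewrite !mem_undup eqAB.
Qed.

Lemma card_n_gt0 A : A != [::] -> 0 < card_n A.
Proof.
case: A => // a A _; rewrite /card_n lt0n size_eq0.
by apply: contraTneq (mem_head a A) => undupE; rewrite -mem_undup undupE.
Qed.

Lemma card_n_pair s : card_n [:: s; s.+1] = 2.
Proof. by rewrite /card_n /= inE eqn_leq ltnn andbF. Qed.

Lemma pair_eq s t : [:: s; s.+1] =i [:: t; t.+1] -> s = t.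
Proof.
move=> eq_st.
have : s \in [:: t; t.+1] by rewrite -eq_st mem_head.
have : t \in [:: s; s.+1] by rewrite eq_st mem_head.
by rewrite !inE; lia.
Qed.

Lemma mem_sumset A B x :
  reflect (exists a b, [/\ a \in A, b \in B & x = a + b]) (x \in sumset A B).
Proof.
apply: (iffP allpairsP) => [[[a b] /= [Aa Bb ->]]|[a [b [Aa Bb ->]]]].
  by exists a, b.
by exists (a, b).
Qed.

Lemma sumsetC A B : sumset A B =i sumset B A.
Proof.
by move=> x; apply/mem_sumset/mem_sumset => -[a [b [Aa Bb ->]]];
  exists b, a; rewrite addnC.
Qed.

Lemma mem_bigmax_seq (B : seq nat) : B != [::] -> \max_(b <- B) b \in B.
Proof.
elim: B => // c B IH _; rewrite big_cons in_cons.
case: B IH => [|d B] IH; first by rewrite big_nil maxn0 eqxx.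
by rewrite /maxn; case: ifP => _; rewrite ?IH ?orbT ?eqxx.
Qed.

Lemma card_n_ge2_ltn A :
  2 <= card_n A -> exists a1 a2, [/\ a1 \in A, a2 \in A & a1 < a2].
Proof.
rewrite /card_n; have := undup_uniq A; have := mem_undup A.
case: (undup A) => [|x [|y s]] //= memA /andP[+ _] _.
rewrite inE negb_or => /andP[x_neq_y _].
have Ax : x \in A by rewrite -memA mem_head.
have Ay : y \in A by rewrite -memA !inE eqxx orbT.
by case: (ltngtP x y) x_neq_y => // [xy|yx] _; [exists x, y | exists y, x].
Qed.

Lemma card_n_sumset_gt A B :
  2 <= card_n A -> B != [::] -> card_n B < card_n (sumset A B).
Proof.
move=> /card_n_ge2_ltn[a1 [a2 [Aa1 Aa2 a12]]] nB.
set m := \max_(b <- B) b.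
pose shifted := undup [seq a1 + b | b <- B].
have size_shifted : size shifted = card_n B.
  by rewrite /shifted undup_map_inj ?size_map //; apply: addnI.
have fresh : a2 + m \notin shifted.
  rewrite mem_undup; apply/mapP => -[b Bb].
  by have := leq_bigmax_seq (F := fun b => b) _ Bb isT; rewrite -/m; lia.
rewrite -size_shifted /card_n; apply: (@uniq_leq_size _ (a2 + m :: shifted)).
  by rewrite /= fresh undup_uniq.
move=> x; rewrite in_cons mem_undup mem_undup => /orP[/eqP->|/mapP[b Bb ->]];
  apply/mem_sumset; last by exists a1, b.
by exists a2, m; rewrite Aa2 mem_bigmax_seq.
Qed.

Definition proper_2colouring (T : finType) (e : rel T) (col : T -> bool) : Prop :=
  forall x y, e x y -> col x != col y.

Lemma uniform_WIASI_mono_colouring (T : finType) (e : rel T) k f :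
  2 <= k -> is_k_uniform_WIASI e k f ->
  proper_2colouring e (fun x => card_n (f x) == 1).
Proof.
move=> k_ge2 [[[f_neq0 _] weak] uniform] x y exy.
have := weak _ _ exy; rewrite uniform //.
have := card_n_gt0 (f_neq0 x); have := card_n_gt0 (f_neq0 y).
case: (leqP 2 (card_n (f x))) => [fx_ge2|]; case: (leqP 2 (card_n (f y))) => [fy_ge2|];
  try lia.
have := card_n_sumset_gt fx_ge2 (f_neq0 y).
have := card_n_sumset_gt fy_ge2 (f_neq0 x).
rewrite (card_n_eq (sumsetC (f y) (f x))) -(uniform _ _ exy); lia.
Qed.

Lemma cart_prod_colouring (T1 T2 : finType) (e1 : rel T1) (e2 : rel T2) c1 c2 :
  proper_2colouring e1 c1 -> proper_2colouring e2 c2 ->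
  proper_2colouring (cart_prod e1 e2) (fun p => c1 p.1 (+) c2 p.2).
Proof.
move=> col1 col2 [x1 x2] [y1 y2] /orP[]/andP[/eqP/= <- exy].
  by move: (col2 _ _ exy); case: (c1 x1); case: (c2 x2); case: (c2 y2).
by move: (col1 _ _ exy); case: (c2 x2); case: (c1 x1); case: (c1 y1).
Qed.

Lemma addn_mul_inj N a b a' b' :
  a < N -> a' < N -> a + N * b = a' + N * b' -> a = a' /\ b = b'.
Proof.
move=> aN a'N eq_ab.
have eq_a : a = a'.
  have := congr1 (modn^~ N) eq_ab.
  by rewrite /= !(addnC _ (N * _)) !(mulnC N) !modnMDl !modn_small.
split=> //; move: eq_ab; rewrite eq_a => /addnI /eqP.
by rewrite eqn_mul2l gtn_eqF ?(leq_ltn_trans _ a'N) //= => /eqP.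
Qed.

Section BipartiteLabelling.

Variables (T : finType) (e : rel T) (col : T -> bool).
Hypothesis col_proper : proper_2colouring e col.

Local Notation N := #|T|.
Local Notation idx x := (nat_of_ord (enum_rank x)).
Local Notation code lo hi := (idx lo + N * idx hi).

Definition bipartite_label (x : T) : seq nat :=
  if col x then [:: N * idx x; (N * idx x).+1] else [:: idx x].

Lemma idx_inj : injective (fun x : T => idx x).
Proof. by move=> x y /val_inj /enum_rank_inj. Qed.

Lemma sumset_bipartite_label x y : e x y ->
  exists lo hi, [set x; y] = [set lo; hi] /\
    sumset (bipartite_label x) (bipartite_label y) =i
      [:: code lo hi; (code lo hi).+1].
Proof.
move=> exy; have := col_proper exy; rewrite /bipartite_label.
case: (col x); case: (col y) => //= _.
  exists y, x; rewrite setUC; split=> // z.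
  by rewrite /sumset /= !inE addSn (addnC (N * _)).
by exists x, y; split=> // z; rewrite /sumset /= !inE addnS.
Qed.

Lemma bipartite_label_inj x y : bipartite_label x =i bipartite_label y -> x = y.
Proof.
move=> eq_xy; have := card_n_eq eq_xy; rewrite /bipartite_label in eq_xy *.
case: (col x) eq_xy; case: (col y) => eq_xy; rewrite ?card_n_pair // => _; apply: idx_inj.
  have /eqP := pair_eq eq_xy.
  by rewrite eqn_mul2l gtn_eqF ?(leq_trans _ (ltn_ord (enum_rank x))) //= => /eqP.
by have := eq_xy (idx x); rewrite !mem_seq1 eqxx => /esym /eqP.
Qed.

Lemma bipartite_label_edge_inj u v u' v' : e u v -> e u' v' ->
  sumset (bipartite_label u) (bipartite_label v) =i
    sumset (bipartite_label u') (bipartite_label v') ->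
  [set u; v] = [set u'; v'].
Proof.
move=> /sumset_bipartite_label[lo [hi [-> sum_uv]]].
move=> /sumset_bipartite_label[lo' [hi' [-> sum_uv']]] eq_sums.
have /pair_eq : [:: code lo hi; (code lo hi).+1] =i [:: code lo' hi'; (code lo' hi').+1].
  by move=> z; rewrite -sum_uv -sum_uv' eq_sums.
by case/(addn_mul_inj (ltn_ord _) (ltn_ord _)) => /idx_inj-> /idx_inj->.
Qed.

Lemma bipartite_label_uniform : is_k_uniform_WIASI e 2 bipartite_label.
Proof.
have card_sum x y : e x y -> card_n (sumset (bipartite_label x) (bipartite_label y)) = 2.
  by case/sumset_bipartite_label => lo [hi [_ /card_n_eq ->]]; rewrite card_n_pair.
split; last exact: card_sum.
split; last first.
  move=> x y exy; rewrite card_sum //; have := col_proper exy; rewrite /bipartite_label.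
  by case: (col x); case: (col y); rewrite //= card_n_pair.
split; first by move=> x; rewrite /bipartite_label; case: (col x).
split; [exact: bipartite_label_inj | exact: bipartite_label_edge_inj].
Qed.

End BipartiteLabelling.

Lemma admits_UWIASI_2colouring (T : finType) (e : rel T) col :
  proper_2colouring e col -> admits_UWIASI e.
Proof.
by move=> col_proper; exists 2, (bipartite_label col); split=> //;
  exact: bipartite_label_uniform.
Qed.

Lemma mono_edges_count_uniform (T : finType) (e : rel T) k f :
  2 <= k -> is_k_uniform_WIASI e k f -> mono_edges_count e f = 0.
Proof.
move=> k_ge2 [_ uniform]; apply/eqP; rewrite cards_eq0; apply/eqP/setP => S.
rewrite inE; apply/negbTE/imsetP => -[p]; rewrite inE => /andP[ep].
by rewrite uniform // gtn_eqF.
Qed.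

Lemma sparing_number_UWIASI (T : finType) (e : rel T) :
  admits_UWIASI e -> sparing_number e 0.
Proof.
case=> k [f [k_ge2 f_uniform]]; split=> //; exists f.
by split; [exact: f_uniform.1 | exact: mono_edges_count_uniform f_uniform].
Qed.

Lemma UWIASI_2colouring (T : finType) (e : rel T) :
  admits_UWIASI e -> exists col, proper_2colouring e col.
Proof.
case=> k [f [k_ge2 f_uniform]]; exists (fun x => card_n (f x) == 1).
exact: uniform_WIASI_mono_colouring f_uniform.
Qed.

Theorem mainTheorem14 (T1 T2 : finType) (e1 : rel T1) (e2 : rel T2) :
  simple_graph e1 -> simple_graph e2 ->
  admits_UWIASI e1 -> admits_UWIASI e2 ->
  admits_UWIASI (cart_prod e1 e2) /\ sparing_number (cart_prod e1 e2) 0.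
Proof.
move=> _ _ /UWIASI_2colouring[c1 col1] /UWIASI_2colouring[c2 col2].
have prod_UWIASI := admits_UWIASI_2colouring (cart_prod_colouring col1 col2).
by split; last exact: sparing_number_UWIASI.
Qed.
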